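(* Let $G$ be a finite graph with maximum degree $\Delta$, with edges ordered $e_1,\ldots,e_m$, let $\gamma>1$ be real, $K=\lceil(2+\gamma)(\Delta-1)\rceil$, and run the Procedure described in the context. Then for each step $i$, the map which assigns to each input prefix $(F_j)_{j\le i}$ (for which steps $1,\ldots,i$ are performed) the output $((R_j)_{j\le i},\Phi_i)$ is injective.
   Context: Procedure. A partial edge-coloring assigns to some edges a color in $\{1,\ldots,K\}$; initially all edges are uncolored. The input is a vector $F$ with entries in $\{1,\ldots,\lceil\gamma(\Delta-1)\rceil\}$. Fix, for every edge $e$ and every $k\ge 3$, an enumeration (e.g. lexicographic) of the cycles of length $2k$ of $G$ containing $e$. At step $i=1,2,\ldots$: if no edge is uncolored, stop. Otherwise let $e_j=uv$ be the uncolored edge of smallest index. Let $S'$ be the set of colors appearing on edges $xy\neq uv$ such that (1) $x=u$ or $x=v$, or (2) edges $ux$ and $vy$ exist and have the same color; let $S=\{1,\ldots,K\}\setminus S'$. Color $e_j$ with the $F_i$-th smallest element of $S$. If this creates a cycle colored with only two colors (it has length $2k\ge 6$), choose one such cycle $C$ by a fixed deterministic rule, write it as $e_{i_1},e_{i_2},\ldots,e_{i_{2k}},e_{i_1}$ (consecutive edges) with $e_{i_1}=e_j$ and $i_2<i_{2k}$, uncolor all edges of $C$ except $e_{i_2}$ and $e_{i_3}$, and set $R_i=(k,\ell)$ where $\ell$ is the index of $C$ in the fixed enumeration of cycles of length $2k$ containing $e_j$. Otherwise $R_i$ is empty. $\Phi_i$ denotes the partial coloring after step $i$. *)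

From HB Require Import structures.
From mathcomp Require Import all_boot all_order all_algebra.
From mathcomp Require Import reals.
Set Implicit Arguments. Unset Strict Implicit. Unset Printing Implicit Defensive.
Import Order.TTheory GRing.Theory Num.Theory.

Section Procedure.
(* A finite graph on vertex type V whose edges are e_0, ..., e_{m-1}
   (the order of the edges is the order of the indices 'I_m);
   edge i joins the two vertices of [ends i]. *)
Variables (V : finType) (m : nat) (ends : 'I_m -> V * V).

Definition edge_between (i : 'I_m) (x y : V) : bool :=
  (ends i == (x, y)) || (ends i == (y, x)).

Definition incident (i : 'I_m) (x : V) : bool :=
  ((ends i).1 == x) || ((ends i).2 == x).

Definition simple_graph : Prop :=
  (forall i, (ends i).1 != (ends i).2) /\
  (forall i j, edge_between j (ends i).1 (ends i).2 -> i = j).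

Definition degree (v : V) : nat := #|[set i | incident i v]|.
Definition max_degree : nat := \max_(v : V) degree v.

Definition edges_adj (i j : 'I_m) : bool :=
  (i != j) && [exists x, incident i x && incident j x].

(* partial edge-coloring: None = uncolored, Some c = colored with c *)
Definition pcoloring := {ffun 'I_m -> option nat}.

Definition cycle_edges (p : seq V) : {set 'I_m} :=
  [set i | has (fun xy => edge_between i xy.1 xy.2) (zip p (rot 1 p))].

Definition is_cycle (C : {set 'I_m}) (n : nat) : Prop :=
  exists p : seq V,
    [/\ uniq p, size p = n, 3 <= n,
        all (fun xy => [exists i, edge_between i xy.1 xy.2]) (zip p (rot 1 p))
      & C = cycle_edges p].

Definition bichromatic (Phi : pcoloring) (C : {set 'I_m}) : Prop :=
  exists c1 c2 : nat, forall f, f \in C -> Phi f = Some c1 \/ Phi f = Some c2.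

Definition valid_enum (enumC : 'I_m -> nat -> seq {set 'I_m}) : Prop :=
  forall e k, 3 <= k ->
    uniq (enumC e k) /\
    (forall C, C \in enumC e k <-> is_cycle C (2 * k) /\ e \in C).

(* the fixed deterministic rule choosing a two-colored cycle through e *)
Definition valid_rule (rule : pcoloring -> 'I_m -> option {set 'I_m}) : Prop :=
  forall Phi e,
    (forall C, rule Phi e = Some C ->
       [/\ e \in C, exists n, is_cycle C n & bichromatic Phi C]) /\
    (rule Phi e = None ->
       forall C n, is_cycle C n -> e \in C -> ~ bichromatic Phi C).

Definition minpick (P : pred 'I_m) : option 'I_m :=
  [pick f | P f && [forall g, P g ==> (f <= g)]].

Definition forbidden (Phi : pcoloring) (j : 'I_m) (c : nat) : bool :=
  let u := (ends j).1 in let v := (ends j).2 in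
  [exists i : 'I_m, [&& i != j, Phi i == Some c &
     (incident i u || incident i v ||
      [exists x : V, exists y : V, edge_between i x y &&
         [exists a : 'I_m, exists b : 'I_m,
            [&& edge_between a u x, edge_between b v y,
                Phi a != None & Phi a == Phi b]]])]].

Variables (K : nat) (enumC : 'I_m -> nat -> seq {set 'I_m})
          (rule : pcoloring -> 'I_m -> option {set 'I_m}).

(* Returns None when the
   step is not performed (no uncolored edge, or f is not a valid position in
   S); otherwise returns (R_i, Phi_i), with R_i = None for "empty". *)
Definition step (Phi : pcoloring) (f : nat)
  : option (option (nat * nat) * pcoloring) :=
  match minpick (fun i => Phi i == None) with
  | None => None
  | Some j =>
    let S := [seq c <- iota 1 K | ~~ forbidden Phi j c] in
    if (0 < f) && (f <= size S) then
      let Phi1 : pcoloring :=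
        [ffun i => if i == j then Some (nth 0 S f.-1) else Phi i] in
      match rule Phi1 j with
      | None => Some (None, Phi1)
      | Some C =>
        let k := #|C| %/ 2 in
        let l := (index C (enumC j k)).+1 in
        let o2 := minpick (fun g => (g \in C) && edges_adj j g) in
        let o3 := [pick g | [&& g \in C, g != j, Some g != o2 &
                               if o2 is Some i2 then edges_adj g i2 else false]] in
        let Phi2 : pcoloring :=
          [ffun g => if [&& g \in C, Some g != o2 & Some g != o3]
                     then None else Phi1 g] in
        Some (Some (k, l), Phi2)
      end
    else None
  end.

Fixpoint run_from (Phi : pcoloring) (F : seq nat)
  : option (seq (option (nat * nat)) * pcoloring) :=
  match F with
  | [::] => Some ([::], Phi)
  | f :: F' =>
    match step Phi f with
    | None => None
    | Some (r, Phi') =>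
      match run_from Phi' F' with
      | None => None
      | Some (rs, Phi'') => Some (r :: rs, Phi'')
      end
    end
  end.

Definition run (F : seq nat) := run_from [ffun => None] F.

End Procedure.

Local Open Scope ring_scope.

Definition Kcol (R : realType) (gamma : R) (Delta : nat) : nat :=
  `|Num.ceil ((2 + gamma) * (Delta%:R - 1))|%N.

Definition input_ok (R : realType) (gamma : R) (Delta : nat) (F : seq nat) : bool :=
  all (fun f => (0 < f)%N && (f%:Z <= Num.ceil (gamma * (Delta%:R - 1)))) F.

(* The Procedure can be run backwards, so a run determines its input.  Every partial
   coloring Phi_i is proper, and the edge e_j treated at step i is the uncolored edge
   of smallest index, which is the same in two runs with the same uncolored sets.  If
   R_i is empty, Phi_{i-1} is Phi_i with e_j uncolored, and F_i is the position of the
   color of e_j in the list S of allowed colors.  Otherwise C is a two-colored cycle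
   of a proper coloring, so its colors alternate along C; in particular it is even,
   and it is not a 4-cycle, as the color given to e_j would then have been forbidden
   by the opposite edge.  Hence k >= 3 and (k, l) names C in the enumeration, and the
   alternation recovers all colors of C from the two edges e_{i_2}, e_{i_3} that
   were left colored. *)
From mathcomp Require Import all_boot all_order all_algebra.
From mathcomp Require Import reals.
From mathcomp Require Import zify.
Set Implicit Arguments. Unset Strict Implicit. Unset Printing Implicit Defensive.

Lemma nth_rot1 (T : Type) (x0 : T) (s : seq T) a :
  a < size s -> nth x0 (rot 1 s) a = nth x0 s (a.+1 %% size s).
Proof.
case: s => [|x s] //= lt_a; rewrite rot1_cons nth_rcons.
have [lt_as|gt_as|->] := ltngtP a (size s).
- by rewrite modn_small.
- by move: lt_a; rewrite ltnS leqNgt gt_as.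
- by rewrite modnn.
Qed.

Lemma eqmodS n a b : a = b %[mod n] -> a.+1 = b.+1 %[mod n].
Proof. by move=> eq_ab; rewrite -[a.+1]addn1 -[b.+1]addn1 -modnDml eq_ab modnDml. Qed.

Lemma minpickP m (Q : pred 'I_m) f : minpick Q = Some f -> Q f.
Proof. by rewrite /minpick; case: pickP => // f' /andP[Qf _] [<-]. Qed.

Lemma minpick_exists m (Q : pred 'I_m) g : Q g -> exists f, minpick Q = Some f.
Proof.
move=> Qg; rewrite /minpick; case: pickP => [f _|none]; first by exists f.
case: (arg_minnP val Qg) => f Qf min_f.
have /negbT := none f; rewrite Qf /= => /forallPn[h]; rewrite negb_imply => /andP[/min_f ->] //.
Qed.

Lemma eq_minpick m (P Q : pred 'I_m) : P =1 Q -> minpick P = minpick Q.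
Proof.
move=> eqPQ; rewrite /minpick; apply: eq_pick => x; rewrite eqPQ.
by congr (_ && _); apply: eq_forallb => y; rewrite eqPQ.
Qed.

Section Graph.
Variables (V : finType) (m : nat) (ends : 'I_m -> V * V).

Lemma edge_betweenC i x y : edge_between ends i x y = edge_between ends i y x.
Proof. by rewrite /edge_between orbC. Qed.

Lemma edge_between_incident i x y :
  edge_between ends i x y -> incident ends i x && incident ends i y.
Proof.
by rewrite /edge_between /incident => /orP[]/eqP->; rewrite /= !eqxx ?orbT.
Qed.

Lemma incident_edge_between i x y z :
  edge_between ends i x y -> incident ends i z -> (z == x) || (z == y).
Proof.
by rewrite /edge_between /incident => /orP[]/eqP-> /orP[]/eqP<-; rewrite eqxx ?orbT.
Qed.

Lemma edges_adjC g h : edges_adj ends g h = edges_adj ends h g.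
Proof.
rewrite /edges_adj eq_sym; congr (_ && _).
by apply: eq_existsb => x; rewrite andbC.
Qed.

Lemma simple_edge_between_inj i i' x y : simple_graph ends ->
  edge_between ends i x y -> edge_between ends i' x y -> i = i'.
Proof.
case=> _ no_parallel /orP[]/eqP ends_i ?; apply: no_parallel;
  by rewrite ends_i // edge_betweenC.
Qed.

Definition proper_coloring (Phi : pcoloring m) :=
  forall g h, edges_adj ends g h -> Phi g != None -> Phi g != Phi h.

(* [second_edge C j] and [third_edge C j] are the edges e_{i_2} and e_{i_3} of the
   Procedure, which stay colored when the cycle C through e_j is uncolored. *)
Definition second_edge (C : {set 'I_m}) j :=
  minpick (fun g => (g \in C) && edges_adj ends j g).

Definition third_edge (C : {set 'I_m}) j :=
  [pick g | [&& g \in C, g != j, Some g != second_edge C j &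
             if second_edge C j is Some i2 then edges_adj ends g i2 else false]].

End Graph.

Section CycleWalk.
Variables (V : finType) (m : nat) (ends : 'I_m -> V * V).
Hypothesis ends_simple : simple_graph ends.
Variables (x0 : V) (e0 : 'I_m) (p : seq V).
Hypotheses (p_uniq : uniq p) (p_size : 3 <= size p)
  (p_edges : all (fun xy => [exists i, edge_between ends i xy.1 xy.2]) (zip p (rot 1 p))).

Local Notation n := (size p).
Local Notation C := (cycle_edges ends p).

Let n_gt0 : 0 < n := ltnW (ltnW p_size).

Definition cyc_vertex a := nth x0 p (a %% n).

(* The default [e0] is never returned: consecutive vertices of [p] are adjacent. *)
Definition cyc_edge a :=
  odflt e0 [pick i | edge_between ends i (cyc_vertex a) (cyc_vertex a.+1)].

Lemma cyc_vertex_eqmod a b : a = b %[mod n] -> cyc_vertex a = cyc_vertex b.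
Proof. by rewrite /cyc_vertex => ->. Qed.

Lemma cyc_vertex_inj a b : cyc_vertex a = cyc_vertex b -> a = b %[mod n].
Proof.
by rewrite /cyc_vertex => /eqP; rewrite nth_uniq ?ltn_mod // => /eqP.
Qed.

Lemma zip_rot1_nth a : a < n ->
  nth (x0, x0) (zip p (rot 1 p)) a = (cyc_vertex a, cyc_vertex a.+1).
Proof.
by move=> lt_an; rewrite nth_zip ?size_rot // nth_rot1 // /cyc_vertex (modn_small lt_an).
Qed.

Lemma mem_cycle_edges g :
  (g \in C) = [exists a : 'I_n, edge_between ends g (cyc_vertex a) (cyc_vertex a.+1)].
Proof.
rewrite inE; apply/(has_nthP (x0, x0))/existsP => [[a]|[a g_a]].
  by rewrite size_zip size_rot minnn => lt_an; rewrite zip_rot1_nth //; exists (Ordinal lt_an).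
by exists a; rewrite ?size_zip ?size_rot ?minnn // zip_rot1_nth.
Qed.

Lemma cyc_edgeP a : edge_between ends (cyc_edge a) (cyc_vertex a) (cyc_vertex a.+1).
Proof.
rewrite /cyc_edge; case: pickP => [//|none].
have lt_an := ltn_pmod a n_gt0.
move/all_nthP: p_edges => /(_ (x0, x0) (a %% n)).
rewrite size_zip size_rot minnn zip_rot1_nth // => /(_ lt_an) /existsP[i].
by rewrite /= (cyc_vertex_eqmod (modn_mod a n)) (cyc_vertex_eqmod (eqmodS (modn_mod a n))) none.
Qed.

Lemma cyc_edge_eqmod a b : a = b %[mod n] -> cyc_edge a = cyc_edge b.
Proof.
by move=> eq_ab; rewrite /cyc_edge (cyc_vertex_eqmod eq_ab) (cyc_vertex_eqmod (eqmodS eq_ab)).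
Qed.

Lemma cyc_edge_in a : cyc_edge a \in C.
Proof.
have lt_an := ltn_pmod a n_gt0.
rewrite mem_cycle_edges; apply/existsP; exists (Ordinal lt_an) => /=.
by rewrite (cyc_vertex_eqmod (modn_mod a n)) (cyc_vertex_eqmod (eqmodS (modn_mod a n))) cyc_edgeP.
Qed.

Lemma cyc_edge_onto g : g \in C -> exists2 a, a < n & g = cyc_edge a.
Proof.
rewrite mem_cycle_edges => /existsP[a g_a]; exists a => //.
exact: simple_edge_between_inj g_a (cyc_edgeP a).
Qed.

Lemma neq_mod_addn2 a : a.+2 != a %[mod n].
Proof. by rewrite -[a.+2]addn2 -{2}[a]addn0 eqn_modDl mod0n modn_small. Qed.

Lemma cyc_edge_inj a b : cyc_edge a = cyc_edge b -> a = b %[mod n].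
Proof.
move=> eq_ab; have := cyc_edgeP a; rewrite eq_ab; have := cyc_edgeP b.
rewrite /edge_between => /orP[]/eqP-> /orP[]/eqP[/cyc_vertex_inj eq1 /cyc_vertex_inj eq2] //.
all: have := neq_mod_addn2 a.
- by rewrite -(eqmodS eq1) eq2 eqxx.
- by rewrite -(eqmodS eq2) eq1 eqxx.
Qed.

Lemma cyc_edge_neq a k : 0 < k < n -> cyc_edge (a + k) != cyc_edge a.
Proof.
move=> k_range; apply/eqP => /cyc_edge_inj /eqP.
by rewrite -{2}[a]addn0 eqn_modDl mod0n modn_small //; lia.
Qed.

Lemma cyc_edge_adj a : edges_adj ends (cyc_edge a) (cyc_edge a.+1).
Proof.
apply/andP; split; first by rewrite eq_sym -addn1 cyc_edge_neq //; lia.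
apply/existsP; exists (cyc_vertex a.+1).
by rewrite (andP (edge_between_incident (cyc_edgeP a))).2
           (andP (edge_between_incident (cyc_edgeP a.+1))).1.
Qed.

Lemma cyc_edge_adj_consecutive a b : edges_adj ends (cyc_edge a) (cyc_edge b) ->
  b = a.+1 %[mod n] \/ a = b.+1 %[mod n].
Proof.
move=> /andP[neq_ab /existsP[x /andP[inc_a inc_b]]].
case/orP: (incident_edge_between (cyc_edgeP a) inc_a) => /eqP xa;
case/orP: (incident_edge_between (cyc_edgeP b) inc_b) => /eqP xb;
  rewrite xa in xb; move/cyc_vertex_inj: xb => eq_ab; [| by right | by left |].
- by rewrite (cyc_edge_eqmod eq_ab) eqxx in neq_ab.
- move/eqP: eq_ab; rewrite -[a.+1]addn1 -[b.+1]addn1 eqn_modDr => /eqP eq_ab.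
  by rewrite (cyc_edge_eqmod eq_ab) eqxx in neq_ab.
Qed.

Lemma card_cycle_edges : #|C| = n.
Proof.
have -> : C = [set cyc_edge a | a : 'I_n].
  apply/setP => g; apply/idP/imsetP => [/cyc_edge_onto[a lt_an ->]|[a _ ->]].
    by exists (Ordinal lt_an).
  exact: cyc_edge_in.
rewrite card_imset ?card_ord // => a b /cyc_edge_inj.
by rewrite !modn_small // => /ord_inj.
Qed.

Section Bichromatic.
Variable Phi : pcoloring m.
Hypotheses (Phi_proper : proper_coloring ends Phi) (Phi_bichromatic : bichromatic Phi C).

Lemma cyc_colored a : Phi (cyc_edge a) != None.
Proof. by case: Phi_bichromatic => c1 [c2 two]; case: (two _ (cyc_edge_in a)) => ->. Qed.

Lemma cyc_color_neq a : Phi (cyc_edge a) != Phi (cyc_edge a.+1).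
Proof. exact: Phi_proper (cyc_edge_adj a) (cyc_colored a). Qed.

Lemma cyc_color_2 a : Phi (cyc_edge a.+2) = Phi (cyc_edge a).
Proof.
case: Phi_bichromatic => c1 [c2 two].
have := cyc_color_neq a; have := cyc_color_neq a.+1.
by case: (two _ (cyc_edge_in a)) => ->; case: (two _ (cyc_edge_in a.+1)) => ->;
  case: (two _ (cyc_edge_in a.+2)) => -> //; rewrite eqxx.
Qed.

Lemma cyc_color_parity a s : Phi (cyc_edge (a + s)) = Phi (cyc_edge (a + odd s)).
Proof.
rewrite -{1}(odd_double_half s) addnA; elim: s./2 => [|t IH]; first by rewrite addn0.
by rewrite doubleS !addnS cyc_color_2.
Qed.

Lemma bichromatic_cycle_even : ~~ odd n.
Proof.
apply/negP => odd_n; have := cyc_color_parity 0 n.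
rewrite odd_n add0n (@cyc_edge_eqmod n 0) ?modnn ?mod0n // => eq01.
by have := cyc_color_neq 0; rewrite eq01 eqxx.
Qed.

End Bichromatic.

Lemma bichromatic_agree (Phi Phi' : pcoloring m) a :
  proper_coloring ends Phi -> proper_coloring ends Phi' ->
  bichromatic Phi C -> bichromatic Phi' C ->
  Phi (cyc_edge a) = Phi' (cyc_edge a) -> Phi (cyc_edge a.+1) = Phi' (cyc_edge a.+1) ->
  {in C, Phi =1 Phi'}.
Proof.
move=> pr pr' bi bi' eq0 eq1 _ /cyc_edge_onto[b _ ->].
have eq_b : b = a + (b + a * n.-1) %[mod n].
  by rewrite addnCA -mulnS prednK 1?addnC ?modnMDl //; lia.
rewrite (cyc_edge_eqmod eq_b) (cyc_color_parity pr bi) (cyc_color_parity pr' bi').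
by case: (odd _); rewrite ?addn1 ?addn0.
Qed.

Lemma bichromatic_agree_adj (Phi Phi' : pcoloring m) g h :
  proper_coloring ends Phi -> proper_coloring ends Phi' ->
  bichromatic Phi C -> bichromatic Phi' C ->
  g \in C -> h \in C -> edges_adj ends g h ->
  Phi g = Phi' g -> Phi h = Phi' h -> {in C, Phi =1 Phi'}.
Proof.
move=> pr pr' bi bi' /cyc_edge_onto[a _ ->] /cyc_edge_onto[b _ ->].
case/cyc_edge_adj_consecutive => eq_ab eq_a eq_b.
- by apply: (bichromatic_agree (a := a)); rewrite // -(cyc_edge_eqmod eq_ab).
- by apply: (bichromatic_agree (a := b)); rewrite // -(cyc_edge_eqmod eq_ab).
Qed.

Lemma kept_edges_exist j : j \in C -> exists g2 g3,
  [/\ second_edge ends C j = Some g2, third_edge ends C j = Some g3,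
      g2 \in C, g3 \in C & edges_adj ends g3 g2].
Proof.
move=> jC; have [b _ ej] := cyc_edge_onto jC.
have [g2 e2] : exists g2, second_edge ends C j = Some g2.
  by apply: (minpick_exists (g := cyc_edge b.+1)); rewrite cyc_edge_in ej cyc_edge_adj.
have /andP[g2C _] := minpickP e2; have [a _ eg2] := cyc_edge_onto g2C.
rewrite /third_edge e2; case: pickP => [g3 /and4P[g3C _ _ adj32]|none].
  by exists g2, g3.
have neighbour g : g \in C -> g != j -> g != g2 -> edges_adj ends g g2 -> False.
  by move=> gC gj gg2 adj; move: (none g); rewrite gC gj /= gg2 adj.
have prev_adj : edges_adj ends (cyc_edge (a + n.-1)) g2.
  by have := cyc_edge_adj (a + n.-1); rewrite -addnS prednK // (cyc_edge_eqmod (modnDr a n)) eg2.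
have next_adj : edges_adj ends (cyc_edge a.+1) g2 by rewrite edges_adjC eg2 cyc_edge_adj.
have prev_g2 : cyc_edge (a + n.-1) != g2 by rewrite eg2 cyc_edge_neq //; lia.
have next_g2 : cyc_edge a.+1 != g2 by rewrite eg2 -addn1 cyc_edge_neq //; lia.
have next_prev : cyc_edge (a + n.-1) != cyc_edge a.+1.
  have -> : a + n.-1 = a.+1 + (n - 2) by lia.
  by rewrite cyc_edge_neq //; lia.
exfalso; have [next_j|next_j] := eqVneq (cyc_edge a.+1) j.
- by apply: (neighbour _ (cyc_edge_in _) _ prev_g2 prev_adj); rewrite -next_j.
- exact: (neighbour _ (cyc_edge_in _) next_j next_g2 next_adj).
Qed.

Lemma kept_edges_determine (Phi Phi' : pcoloring m) j :
  proper_coloring ends Phi -> proper_coloring ends Phi' ->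
  bichromatic Phi C -> bichromatic Phi' C -> j \in C ->
  (forall g, Some g = second_edge ends C j \/ Some g = third_edge ends C j ->
     Phi g = Phi' g) ->
  {in C, Phi =1 Phi'}.
Proof.
move=> pr pr' bi bi' jC agree_kept.
have [g2 [g3 [e2 e3 g2C g3C adj32]]] := kept_edges_exist jC.
by apply: (bichromatic_agree_adj pr pr' bi bi' g3C g2C adj32); apply: agree_kept;
  [right | left].
Qed.

Lemma cycle4_forbidden (Phi Phi1 : pcoloring m) j c :
  n = 4 -> j \in C -> proper_coloring ends Phi1 -> bichromatic Phi1 C ->
  Phi1 j = Some c -> (forall g, g != j -> Phi g = Phi1 g) -> forbidden ends Phi j c.
Proof.
move=> n4 jC pr bi Phi1_j Phi_off_j.
have [a _ ej] := cyc_edge_onto jC.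
have neq_j k : 0 < k < 4 -> cyc_edge (a + k) != j by rewrite ej -n4; exact: cyc_edge_neq.
have ne1 : cyc_edge a.+1 != j by rewrite -[a.+1]addn1 neq_j.
have ne2 : cyc_edge a.+2 != j by rewrite -[a.+2]addn2 neq_j.
have ne3 : cyc_edge a.+3 != j by rewrite -[a.+3]addn3 neq_j.
have opp_c : Phi (cyc_edge a.+2) = Some c by rewrite Phi_off_j // (cyc_color_2 pr bi) -ej.
have side_eq : Phi (cyc_edge a.+3) = Phi (cyc_edge a.+1).
  by rewrite !Phi_off_j // (cyc_color_2 pr bi).
have side_colored : Phi (cyc_edge a.+3) != None by rewrite Phi_off_j ?(cyc_colored bi).
have closing : edge_between ends (cyc_edge a.+3) (cyc_vertex a) (cyc_vertex a.+3).
  by rewrite edge_betweenC (@cyc_vertex_eqmod a a.+4) ?cyc_edgeP // -addn4 -n4 modnDr.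
apply/existsP; exists (cyc_edge a.+2); rewrite ne2 opp_c eqxx /=; apply/orP; right.
move: (cyc_edgeP a); rewrite -ej => /orP[]/eqP-> /=.
- apply/existsP; exists (cyc_vertex a.+3); apply/existsP; exists (cyc_vertex a.+2).
  rewrite edge_betweenC cyc_edgeP /=; apply/existsP; exists (cyc_edge a.+3).
  by apply/existsP; exists (cyc_edge a.+1); rewrite side_colored side_eq eqxx closing cyc_edgeP.
- apply/existsP; exists (cyc_vertex a.+2); apply/existsP; exists (cyc_vertex a.+3).
  rewrite cyc_edgeP /=; apply/existsP; exists (cyc_edge a.+1).
  by apply/existsP; exists (cyc_edge a.+3); rewrite -side_eq side_colored eqxx cyc_edgeP closing.
Qed.

End CycleWalk.

Section IsCycle.
Variables (V : finType) (m : nat) (ends : 'I_m -> V * V).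
Hypothesis ends_simple : simple_graph ends.

Lemma is_cycle_bichromatic_even C n (Phi : pcoloring m) j :
  is_cycle ends C n -> j \in C -> proper_coloring ends Phi -> bichromatic Phi C ->
  #|C| = n /\ ~~ odd n.
Proof.
case=> p [p_uniq <- p_size p_edges ->] _ pr bi; split.
  exact: (card_cycle_edges ends_simple (ends j).1 j).
exact: (bichromatic_cycle_even (ends j).1 j p_uniq p_size p_edges pr bi).
Qed.

Lemma is_cycle4_forbidden C (Phi Phi1 : pcoloring m) j c :
  is_cycle ends C 4 -> j \in C -> proper_coloring ends Phi1 -> bichromatic Phi1 C ->
  Phi1 j = Some c -> (forall g, g != j -> Phi g = Phi1 g) -> forbidden ends Phi j c.
Proof.
case=> p [p_uniq p_size4 _ p_edges ->].
have p_size : 2 < size p by rewrite p_size4.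
exact: (cycle4_forbidden ends_simple (ends j).1 j p_uniq p_size p_edges p_size4).
Qed.

Lemma is_cycle_kept_edges_determine C n (Phi Phi' : pcoloring m) j :
  is_cycle ends C n -> proper_coloring ends Phi -> proper_coloring ends Phi' ->
  bichromatic Phi C -> bichromatic Phi' C -> j \in C ->
  (forall g, Some g = second_edge ends C j \/ Some g = third_edge ends C j ->
     Phi g = Phi' g) ->
  {in C, Phi =1 Phi'}.
Proof.
case=> p [p_uniq <- p_size p_edges ->].
exact: (kept_edges_determine ends_simple (ends j).1 j p_uniq p_size p_edges).
Qed.

End IsCycle.

Section Step.
Variables (V : finType) (m : nat) (ends : 'I_m -> V * V).
Variables (K : nat) (enumC : 'I_m -> nat -> seq {set 'I_m})
          (rule : pcoloring m -> 'I_m -> option {set 'I_m}).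
Hypotheses (ends_simple : simple_graph ends)
  (enumC_valid : valid_enum ends enumC) (rule_valid : valid_rule ends rule).

Local Notation proper := (proper_coloring ends).

Definition palette (Phi : pcoloring m) j :=
  [seq c <- iota 1 K | ~~ forbidden ends Phi j c].

Definition recolor (Phi : pcoloring m) j c : pcoloring m :=
  [ffun i => if i == j then Some c else Phi i].

Definition uncolor_cycle (Phi : pcoloring m) (C : {set 'I_m}) j : pcoloring m :=
  [ffun g => if [&& g \in C, Some g != second_edge ends C j & Some g != third_edge ends C j]
             then None else Phi g].

Definition same_uncolored (Phi Phi' : pcoloring m) :=
  forall g, (Phi g == None) = (Phi' g == None).

Lemma palette_nth_allowed Phi j f : 0 < f <= size (palette Phi j) ->
  ~~ forbidden ends Phi j (nth 0 (palette Phi j) f.-1).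
Proof.
case/andP=> f_gt0 f_le; have : nth 0 (palette Phi j) f.-1 \in palette Phi j.
  by rewrite mem_nth // prednK.
by rewrite mem_filter => /andP[].
Qed.

Lemma palette_nth_inj Phi j f f' :
  0 < f <= size (palette Phi j) -> 0 < f' <= size (palette Phi j) ->
  nth 0 (palette Phi j) f.-1 = nth 0 (palette Phi j) f'.-1 -> f = f'.
Proof.
case/andP=> f_gt0 f_le /andP[f'_gt0 f'_le] /eqP.
rewrite nth_uniq ?prednK ?filter_uniq ?iota_uniq // => /eqP eq_pred.
by rewrite -(prednK f_gt0) -(prednK f'_gt0) eq_pred.
Qed.

Lemma recolor_proper Phi j c : proper Phi -> ~~ forbidden ends Phi j c ->
  proper (recolor Phi j c).
Proof.
move=> pr allowed.
have neighbour_not_c h : edges_adj ends j h -> Phi h != Some c.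
  move=> /andP[jh /existsP[x /andP[j_x h_x]]]; apply: contra allowed => /eqP Phi_h.
  apply/existsP; exists h; rewrite eq_sym jh Phi_h eqxx /=.
  by move: j_x h_x; rewrite {1}/incident => /orP[]/eqP <- ->; rewrite ?orbT.
move=> g h adj; rewrite !ffunE.
case: (eqVneq g j) => [gj|gj]; case: (eqVneq h j) => [hj|hj].
- by move: adj; rewrite /edges_adj gj hj eqxx.
- by move=> _; rewrite eq_sym neighbour_not_c // -gj.
- by move=> _; rewrite neighbour_not_c // edges_adjC -hj.
- exact: pr.
Qed.

Lemma uncolor_cycle_proper Phi C j : proper Phi -> proper (uncolor_cycle Phi C j).
Proof. by move=> pr g h adj; rewrite !ffunE; case: ifP => //; case: ifP => // _ _; apply: pr. Qed.

Lemma recolor_inj (Phi Phi' : pcoloring m) j c c' : Phi j = None -> Phi' j = None ->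
  recolor Phi j c = recolor Phi' j c' -> Phi = Phi' /\ c = c'.
Proof.
move=> Phi_j Phi'_j eq_rec; have at_g g := congr1 (fun Psi : pcoloring m => Psi g) eq_rec.
split; last by have := at_g j; rewrite !ffunE eqxx => -[].
apply/ffunP => g; have [->|gj] := eqVneq g j; first by rewrite Phi_j Phi'_j.
by have := at_g g; rewrite !ffunE (negbTE gj).
Qed.

Lemma rule_cycle_enumerated Phi j c C : proper Phi -> ~~ forbidden ends Phi j c ->
  rule (recolor Phi j c) j = Some C -> C \in enumC j (#|C| %/ 2).
Proof.
move=> pr allowed rule_C.
have [jC [n C_cycle] bi] := (rule_valid (recolor Phi j c) j).1 C rule_C.
have pr1 := recolor_proper pr allowed.
have [card_C even_n] := is_cycle_bichromatic_even ends_simple C_cycle jC pr1 bi.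
have n_ne4 : n != 4.
  apply: contra allowed => /eqP n4; rewrite n4 in C_cycle.
  apply: (is_cycle4_forbidden ends_simple C_cycle jC pr1 bi); first by rewrite ffunE eqxx.
  by move=> g gj; rewrite ffunE (negbTE gj).
have n_eq : 2 * (n %/ 2) = n.
  by rewrite divn2 -{2}(odd_double_half n) (negbTE even_n) add0n -muln2 mulnC.
have k_ge3 : 3 <= n %/ 2 by case: C_cycle => p [_ _ n_ge3 _ _]; lia.
by rewrite card_C; apply/(enumC_valid j k_ge3).2; rewrite n_eq.
Qed.

Lemma uncolor_cycle_inj Phi1 Phi1' j C : proper Phi1 -> proper Phi1' ->
  rule Phi1 j = Some C -> rule Phi1' j = Some C ->
  uncolor_cycle Phi1 C j = uncolor_cycle Phi1' C j -> Phi1 = Phi1'.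
Proof.
move=> pr pr' rule_C rule_C' eq_unc; apply/ffunP => g.
have [jC [n C_cycle] bi] := (rule_valid Phi1 j).1 C rule_C.
have [_ _ bi'] := (rule_valid Phi1' j).1 C rule_C'.
have kept h : ~~ [&& h \in C, Some h != second_edge ends C j & Some h != third_edge ends C j] ->
    Phi1 h = Phi1' h.
  by move=> h_kept; have := congr1 (fun Psi : pcoloring m => Psi h) eq_unc;
    rewrite !ffunE (negbTE h_kept).
have [gC|gC] := boolP (g \in C); last by apply: kept; rewrite (negbTE gC).
apply: (is_cycle_kept_edges_determine ends_simple C_cycle pr pr' bi bi' jC) => // h.
by case=> kept_h; apply: kept; rewrite -kept_h eqxx ?andbF.
Qed.

Lemma stepE (Phi : pcoloring m) f :
  step ends K enumC rule Phi f =
  if minpick (fun i => Phi i == None) is Some j then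
    if 0 < f <= size (palette Phi j) then
      let Phi1 := recolor Phi j (nth 0 (palette Phi j) f.-1) in
      if rule Phi1 j is Some C then
        Some (Some (#|C| %/ 2, (index C (enumC j (#|C| %/ 2))).+1), uncolor_cycle Phi1 C j)
      else Some (None, Phi1)
    else None
  else None.
Proof. by []. Qed.

Lemma step_inj (Phi Phi' : pcoloring m) f f' r Psi Psi' :
  proper Phi -> proper Phi' -> same_uncolored Phi Phi' ->
  step ends K enumC rule Phi f = Some (r, Psi) ->
  step ends K enumC rule Phi' f' = Some (r, Psi') ->
  [/\ proper Psi, proper Psi', same_uncolored Psi Psi'
    & Psi = Psi' -> Phi = Phi' /\ f = f'].
Proof.
move=> pr pr' unc.
rewrite !stepE (@eq_minpick _ (fun i => Phi' i == None) (fun i => Phi i == None)); last first.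
  by move=> g; rewrite unc.
case ej: minpick => [j|] //.
have /eqP Phi_j := minpickP ej; have /eqP Phi'_j : Phi' j == None by rewrite -unc (minpickP ej).
case: ifP => // f_range; case: ifP => // f'_range /=.
set c := nth 0 _ f.-1; set c' := nth 0 _ f'.-1.
have allowed := palette_nth_allowed f_range; have allowed' := palette_nth_allowed f'_range.
have pr1 := recolor_proper pr allowed; have pr1' := recolor_proper pr' allowed'.
have recolor_eq : recolor Phi j c = recolor Phi' j c' -> Phi = Phi' /\ f = f'.
  case/(recolor_inj Phi_j Phi'_j) => eq_Phi eq_c; subst Phi'; split=> //.
  exact: palette_nth_inj f_range f'_range eq_c.
case rule_C: (rule _ j) => [C|]; case rule_C': (rule _ j) => [C'|];
  [| by move=> [<- _] [] | by move=> [<- _] [] |].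
- case=> <- <- [] eq_k eq_l <-.
  have C_enum := rule_cycle_enumerated pr allowed rule_C.
  have C'_enum := rule_cycle_enumerated pr' allowed' rule_C'.
  rewrite eq_k in C'_enum eq_l.
  have eq_C : C' = C := index_inj C C'_enum C_enum eq_l.
  subst C'; split; try exact: uncolor_cycle_proper.
    by move=> g; rewrite !ffunE; case: ifP => // _; case: (g == j); last exact: unc.
  by move/(uncolor_cycle_inj pr1 pr1' rule_C rule_C').
- case=> <- <- [<-]; split=> // g.
  by rewrite !ffunE; case: (g == j); last exact: unc.
Qed.

Lemma run_from_inj (Phi Phi' : pcoloring m) F F' out :
  proper Phi -> proper Phi' -> same_uncolored Phi Phi' ->
  run_from ends K enumC rule Phi F = Some out ->
  run_from ends K enumC rule Phi' F' = Some out -> Phi = Phi' /\ F = F'.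
Proof.
elim: F F' Phi Phi' out => [|f F IH] [|f' F'] Phi Phi' out pr pr' unc //=.
- by move=> <- [->].
- by move=> <-; case: step => // -[r Psi]; case: run_from => // -[].
- by case: step => // -[r Psi]; case: run_from => // -[rs Psi2] <-; case.
case step_f: step => // [[r Psi]]; case run_F: run_from => // [[rs Psi2]] <-.
case step_f': step => // [[r' Psi']]; case run_F': run_from => // [[rs' Psi2']].
case=> eq_r eq_rs eq_Psi2; subst r' rs' Psi2'.
have [prPsi prPsi' uncPsi Psi_inj] := step_inj pr pr' unc step_f step_f'.
by have [/Psi_inj[-> ->] ->] := IH _ _ _ _ prPsi prPsi' uncPsi run_F run_F'.
Qed.

End Step.

Unset Implicit Arguments.

Theorem lemma2 (R : realType) (V : finType) (m : nat) (ends : 'I_m -> V * V)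
  (gamma : R) (enumC : 'I_m -> nat -> seq {set 'I_m})
  (rule : pcoloring m -> 'I_m -> option {set 'I_m}) :
  simple_graph ends -> (1 < gamma)%R ->
  valid_enum ends enumC -> valid_rule ends rule ->
  forall (i : nat) (F1 F2 : seq nat),
    size F1 = i -> size F2 = i ->
    input_ok gamma (max_degree ends) F1 -> input_ok gamma (max_degree ends) F2 ->
    forall out,
      run ends (Kcol gamma (max_degree ends)) enumC rule F1 = Some out ->
      run ends (Kcol gamma (max_degree ends)) enumC rule F2 = Some out ->
      F1 = F2.
Proof.
move=> ends_simple _ enumC_valid rule_valid i F1 F2 _ _ _ _ out run1 run2.
have empty_proper : proper_coloring ends [ffun => None] by move=> g h _; rewrite ffunE.
exact: (run_from_inj ends_simple enumC_valid rule_valid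
          empty_proper empty_proper (fun _ => erefl) run1 run2).2.
Qed.
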